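(* Let $\mathrm{S}$ be a semicopula such that for each $a\in(0,1)$ the interval $[0,1]$ is the union of countably many closed intervals on each of which the function $x\mapsto\mathrm{S}(a,x)$ is either constant or strictly increasing. Then the following are equivalent: (i) for every measurable space $(X,\mathcal{A})$, every capacity $\mu$ on $\mathcal{A}$, every $\mathcal{A}$-measurable $f\colon X\to[0,1]$ and every $a\in[0,1]$, $$\mathbf{I}_{\mathrm{S}}\big(\mu,\mathrm{S}(a,f)\big)=\mathrm{S}\big(a,\mathbf{I}_{\mathrm{S}}(\mu,f)\big),$$ where $\mathrm{S}(a,f)$ denotes the function $x\mapsto\mathrm{S}(a,f(x))$; (ii) $\mathrm{S}$ is associative (i.e. $\mathrm{S}(\mathrm{S}(x,y),z)=\mathrm{S}(x,\mathrm{S}(y,z))$ for all $x,y,z\in[0,1]$) and for each $a\in(0,1)$ the function $[0,1]\ni x\mapsto\mathrm{S}(a,x)$ is continuous.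
   Context: A semicopula is a function $\mathrm{S}\colon[0,1]^2\to[0,1]$ that is non-decreasing in each coordinate and has neutral element $1$, i.e. $\mathrm{S}(x,1)=\mathrm{S}(1,x)=x$ for all $x\in[0,1]$. For a measurable space $(X,\mathcal{A})$ (with $X$ nonempty and $\mathcal{A}$ a $\sigma$-algebra), a capacity on $\mathcal{A}$ is a non-decreasing set function $\mu\colon\mathcal{A}\to[0,1]$ with $\mu(\emptyset)=0$ and $\mu(X)=1$. For a capacity $\mu$ and an $\mathcal{A}$-measurable $f\colon X\to[0,1]$, the generalized Sugeno integral is $$\mathbf{I}_{\mathrm{S}}(\mu,f)=\sup_{t\in[0,1]}\mathrm{S}\big(t,\mu(\{x\in X: f(x)\ge t\})\big).$$ *)

From Stdlib Require Import Reals ClassicalEpsilon.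
Open Scope R_scope.

Definition in01 (x : R) : Prop := 0 <= x <= 1.

(* Semicopula on [0,1] (values outside [0,1] are irrelevant). *)
Definition semicopula (S : R -> R -> R) : Prop :=
  (forall x y, in01 x -> in01 y -> in01 (S x y)) /\
  (forall x1 x2 y, in01 x1 -> in01 x2 -> in01 y -> x1 <= x2 -> S x1 y <= S x2 y) /\
  (forall x y1 y2, in01 x -> in01 y1 -> in01 y2 -> y1 <= y2 -> S x y1 <= S x y2) /\
  (forall x, in01 x -> S x 1 = x /\ S 1 x = x).

Definition sigma_algebra {X : Type} (A : (X -> Prop) -> Prop) : Prop :=
  A (fun _ => False) /\
  (forall E, A E -> A (fun x => ~ E x)) /\
  (forall F : nat -> X -> Prop, (forall n, A (F n)) -> A (fun x => exists n, F n x)).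

Definition borel (B : R -> Prop) : Prop :=
  forall Sg : (R -> Prop) -> Prop, sigma_algebra Sg ->
    (forall a b, Sg (fun x => a < x < b)) -> Sg B.

Definition measurable {X : Type} (A : (X -> Prop) -> Prop) (f : X -> R) : Prop :=
  forall B, borel B -> A (fun x => B (f x)).

Definition capacity {X : Type} (A : (X -> Prop) -> Prop) (mu : (X -> Prop) -> R) : Prop :=
  (forall E, A E -> in01 (mu E)) /\
  (forall E F, A E -> A F -> (forall x, E x -> F x) -> mu E <= mu F) /\
  mu (fun _ => False) = 0 /\ mu (fun _ => True) = 1.

Definition Rsup (E : R -> Prop) : R := epsilon (inhabits 0) (fun m => is_lub E m).

Definition sugeno {X : Type} (S : R -> R -> R) (mu : (X -> Prop) -> R) (f : X -> R) : R :=
  Rsup (fun y => exists t, in01 t /\ y = S t (mu (fun x => t <= f x))).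

Definition piecewise_cst_or_strict (g : R -> R) : Prop :=
  exists l u : nat -> R,
    (forall n, 0 <= l n <= u n /\ u n <= 1) /\
    (forall x, in01 x -> exists n, l n <= x <= u n) /\
    (forall n, (forall x y, l n <= x <= u n -> l n <= y <= u n -> g x = g y) \/
               (forall x y, l n <= x <= u n -> l n <= y <= u n -> x < y -> g x < g y)).

Definition continuous01 (g : R -> R) : Prop :=
  forall x, in01 x -> forall eps, 0 < eps -> exists delta, 0 < delta /\
    forall y, in01 y -> Rabs (y - x) < delta -> Rabs (g y - g x) < eps.

From Stdlib Require Import Reals Lra ClassicalEpsilon Classical.
From Stdlib Require Import FunctionalExtensionality PropExtensionality.
Open Scope R_scope.

(* (i) -> (ii): on bool, with the capacity giving 1 to sets containing false
   and z to {true}, the Sugeno integral of (true |-> y, false |-> 0) is S y z,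
   so homogeneity becomes associativity.  On nat, the capacities "E is
   everything" and "E is nonempty" make the Sugeno integral the infimum and the
   supremum of a sequence, so S a commutes with limits of monotone sequences
   from both sides, i.e. is continuous.
   (ii) -> (i): by continuity every upper level set {s <= S a f} is empty or
   equal to {t <= f} with S a t = s, so associativity rewrites each value
   S s mu{s <= S a f} of the left integral as S a (S t mu{t <= f}); continuity
   of S a then lets it pass through the supremum. *)

Lemma Rsup_eq (E : R -> Prop) (m : R) : is_lub E m -> Rsup E = m.
Proof.
  intro Hm. unfold Rsup.
  assert (Heps : is_lub E (epsilon (inhabits 0) (fun m => is_lub E m))).
  { apply epsilon_spec. exists m; exact Hm. }
  destruct Hm as [Hub Hleast], Heps as [Hub' Hleast'].
  apply Rle_antisym; [apply Hleast' | apply Hleast]; assumption.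
Qed.

Lemma Rsup_is_lub (E : R -> Prop) (b : R) :
  (exists y, E y) -> (forall y, E y -> y <= b) -> is_lub E (Rsup E).
Proof.
  intros Hne Hb. destruct (completeness E) as [m Hm]; [exists b; exact Hb | exact Hne |].
  rewrite (Rsup_eq E m Hm). exact Hm.
Qed.

Lemma le_of_le_add_inv_succ (x y : R) : (forall n, y <= x + / (INR n + 1)) -> y <= x.
Proof.
  intro H. apply Rnot_lt_le; intro Hxy.
  destruct (archimed_cor1 (y - x)) as [N [HN HN0]]; [lra|].
  specialize (H (pred N)). rewrite <- S_INR, Nat.succ_pred_pos in H; [lra | assumption].
Qed.

Lemma in01_0 : in01 0. Proof. unfold in01; lra. Qed.
Lemma in01_1 : in01 1. Proof. unfold in01; lra. Qed.
#[local] Hint Resolve in01_0 in01_1 : core.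

Definition nondecreasing01 (g : R -> R) : Prop :=
  forall x y, in01 x -> in01 y -> x <= y -> g x <= g y.

Section NondecreasingFunction.
Variable g : R -> R.
Hypothesis g_mono : nondecreasing01 g.

Lemma continuous01_of_one_sided :
  (forall x e, in01 x -> 0 < e -> exists d, 0 < d /\ g (Rmin 1 (x + d)) < g x + e) ->
  (forall x e, in01 x -> 0 < e -> exists d, 0 < d /\ g x - e < g (Rmax 0 (x - d))) ->
  continuous01 g.
Proof.
  intros Hright Hleft x Hx e He.
  destruct (Hright x e Hx He) as [d1 [Hd1 H1]], (Hleft x e Hx He) as [d2 [Hd2 H2]].
  exists (Rmin d1 d2); split; [now apply Rmin_pos|].
  intros y Hy Hyx. apply Rabs_def2 in Hyx.
  pose proof (Rmin_l d1 d2); pose proof (Rmin_r d1 d2). destruct Hx, Hy.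
  assert (g y <= g (Rmin 1 (x + d1))).
  { apply g_mono; [split | split |]; try apply Rmin_glb; try apply Rmin_l; lra. }
  assert (g (Rmax 0 (x - d2)) <= g y).
  { apply g_mono; [split | split |]; try apply Rmax_lub; try apply Rmax_l; lra. }
  apply Rabs_def1; lra.
Qed.

Lemma continuous_nondecreasing_lub (E : R -> Prop) (m : R) :
  continuous01 g -> (forall y, E y -> in01 y) -> in01 m -> is_lub E m ->
  is_lub (fun v => exists y, E y /\ v = g y) (g m).
Proof.
  intros Hc HE Hm [Hub Hleast]. split.
  - intros v [y [Hy ->]]. apply g_mono; auto.
  - intros b Hb. apply Rnot_lt_le; intro Hbm.
    destruct (Hc m Hm (g m - b)) as [d [Hd Hgd]]; [lra|].
    assert (Hnear : exists y, E y /\ m - d < y).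
    { apply NNPP; intro Hno. assert (m <= m - d); [|lra].
      apply Hleast. intros y Hy. apply Rnot_lt_le; intro. apply Hno; eauto. }
    destruct Hnear as [y [Hy Hmy]].
    assert (y <= m) by auto.
    assert (g y <= b) by (apply Hb; eauto).
    specialize (Hgd y (HE y Hy) ltac:(rewrite Rabs_left1; lra)).
    apply Rabs_def2 in Hgd. lra.
Qed.

(* [t] is the greatest lower bound of the upper level set {s <= g}, computed as
   the supremum of its lower bounds in [0,1]. *)
Lemma continuous_nondecreasing_level (s : R) :
  continuous01 g -> g 0 <= s <= g 1 ->
  exists t, in01 t /\ g t = s /\ forall y, in01 y -> (s <= g y <-> t <= y).
Proof.
  intros Hc Hs.
  set (D := fun y => in01 y /\ forall z, in01 z -> s <= g z -> y <= z).
  destruct (completeness D) as [t [Hub Hleast]].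
  { exists 1. intros y [[_ Hy] _]. exact Hy. }
  { exists 0. split; auto. intros z [Hz _] _; exact Hz. }
  assert (HD0 : D 0) by (split; auto; intros z [Hz _] _; exact Hz).
  assert (Ht : in01 t) by (split; [apply Hub, HD0 | apply Hleast; intros y [[_ Hy] _]; exact Hy]).
  assert (Hlow : forall z, in01 z -> s <= g z -> t <= z).
  { intros z Hz Hsz. apply Hleast. intros y [_ Hy]. auto. }
  assert (Hge : s <= g t).
  { apply Rnot_lt_le; intro Hlt.
    assert (Ht1 : t < 1) by (destruct Ht; destruct (Req_dec t 1); [subst t; lra | lra]).
    destruct (Hc t Ht (s - g t)) as [d [Hd Hgd]]; [lra|].
    set (y := Rmin 1 (t + d / 2)).
    assert (Hty : t < y) by (apply Rmin_glb_lt; lra).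
    assert (Hyd : y <= t + d / 2) by apply Rmin_r.
    assert (D y).
    { split; [split; [destruct Ht; lra | apply Rmin_l] |].
      intros z Hz Hsz. apply Rnot_lt_le; intro Hzy.
      assert (t <= z) by auto.
      specialize (Hgd z Hz ltac:(rewrite Rabs_pos_eq; lra)).
      apply Rabs_def2 in Hgd. lra. }
    assert (y <= t) by auto. lra. }
  assert (Hle : g t <= s).
  { apply Rnot_lt_le; intro Hlt.
    assert (Ht0 : 0 < t) by (destruct Ht; destruct (Req_dec t 0); [subst t; lra | lra]).
    destruct (Hc t Ht (g t - s)) as [d [Hd Hgd]]; [lra|].
    set (y := Rmax 0 (t - d / 2)).
    assert (Hyt : y < t) by (apply Rmax_lub_lt; lra).
    assert (Hy : in01 y) by (split; [apply Rmax_l | destruct Ht; lra]).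
    assert (Hyd : t - d / 2 <= y) by apply Rmax_r.
    specialize (Hgd y Hy ltac:(rewrite Rabs_left1; lra)).
    apply Rabs_def2 in Hgd.
    assert (t <= y) by (apply Hlow; [exact Hy | lra]). lra. }
  exists t. split; [exact Ht | split; [lra |]].
  intros y Hy. split; [now apply Hlow |].
  intro Hty. apply Rle_trans with (g t); [exact Hge | now apply g_mono].
Qed.

End NondecreasingFunction.

Lemma sigma_algebra_full (X : Type) : sigma_algebra (fun _ : X -> Prop => True).
Proof. repeat split. Qed.

Lemma borel_ge (t : R) : borel (fun r => t <= r).
Proof.
  intros Sg [_ [Hcompl Hunion]] Hint.
  assert (E : (fun r => t <= r) = (fun r => ~ (exists n, t - INR n - 1 < r < t))).
  { apply functional_extensionality; intro r; apply propositional_extensionality; split.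
    - intros H [n Hn]; lra.
    - intro H. apply Rnot_lt_le. intro Hr. apply H.
      destruct (INR_unbounded (t - r)) as [n Hn]. exists n. lra. }
  rewrite E. apply Hcompl, Hunion. intro n. apply Hint.
Qed.

Ltac destruct_ifs :=
  repeat match goal with
         | |- context [excluded_middle_informative ?P] =>
             destruct (excluded_middle_informative P)
         end.

Definition mu_two_point (y : R) (E : bool -> Prop) : R :=
  if excluded_middle_informative (E false) then 1
  else if excluded_middle_informative (E true) then y else 0.

Lemma mu_two_point_in01 (y : R) (E : bool -> Prop) : in01 y -> in01 (mu_two_point y E).
Proof. intro Hy. unfold mu_two_point. destruct_ifs; auto. Qed.

Lemma mu_two_point_capacity (y : R) : in01 y -> capacity (fun _ => True) (mu_two_point y).
Proof.
  intro Hy. split; [|split; [|split]].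
  - intros E _. now apply mu_two_point_in01.
  - intros E F _ _ HEF. unfold mu_two_point. destruct Hy.
    destruct_ifs; try lra; exfalso; auto.
  - unfold mu_two_point. destruct_ifs; tauto.
  - unfold mu_two_point. destruct_ifs; tauto.
Qed.

Definition mu_forall {T : Type} (E : T -> Prop) : R :=
  if excluded_middle_informative (forall x, E x) then 1 else 0.

Definition mu_exists {T : Type} (E : T -> Prop) : R :=
  if excluded_middle_informative (exists x, E x) then 1 else 0.

Lemma mu_forall_in01 {T : Type} (E : T -> Prop) : in01 (mu_forall E).
Proof. unfold mu_forall. destruct_ifs; auto. Qed.

Lemma mu_exists_in01 {T : Type} (E : T -> Prop) : in01 (mu_exists E).
Proof. unfold mu_exists. destruct_ifs; auto. Qed.

Lemma mu_forall_capacity {T : Type} : inhabited T -> capacity (fun _ => True) (@mu_forall T).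
Proof.
  intros [x0]. split; [|split; [|split]].
  - intros E _. apply mu_forall_in01.
  - intros E F _ _ HEF. unfold mu_forall. destruct_ifs; try lra. exfalso; auto.
  - unfold mu_forall. destruct_ifs; [exfalso; eauto | reflexivity].
  - unfold mu_forall. destruct_ifs; [reflexivity | exfalso; auto].
Qed.

Lemma mu_exists_capacity {T : Type} : inhabited T -> capacity (fun _ => True) (@mu_exists T).
Proof.
  intros [x0]. split; [|split; [|split]].
  - intros E _. apply mu_exists_in01.
  - intros E F _ _ HEF. unfold mu_exists. destruct_ifs; try lra.
    exfalso; firstorder.
  - unfold mu_exists. destruct_ifs; [firstorder | reflexivity].
  - unfold mu_exists. destruct_ifs; [reflexivity | exfalso; eauto].
Qed.

Definition sugeno_homogeneous (S : R -> R -> R) : Prop :=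
  forall (X : Type) (A : (X -> Prop) -> Prop) (mu : (X -> Prop) -> R) (f : X -> R) (a : R),
    inhabited X -> sigma_algebra A -> capacity A mu ->
    (forall x, in01 (f x)) -> measurable A f -> in01 a ->
    sugeno S mu (fun x => S a (f x)) = S a (sugeno S mu f).

Section Semicopula.
Variable S : R -> R -> R.
Hypothesis HS : semicopula S.

Lemma semicopula_in01 x y : in01 x -> in01 y -> in01 (S x y).
Proof. destruct HS as [H _]; auto. Qed.

Lemma semicopula_mono_l x1 x2 y :
  in01 x1 -> in01 x2 -> in01 y -> x1 <= x2 -> S x1 y <= S x2 y.
Proof. destruct HS as [_ [H _]]; auto. Qed.

Lemma semicopula_mono_r x y1 y2 :
  in01 x -> in01 y1 -> in01 y2 -> y1 <= y2 -> S x y1 <= S x y2.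
Proof. destruct HS as [_ [_ [H _]]]; auto. Qed.

Lemma semicopula_x1 x : in01 x -> S x 1 = x.
Proof. destruct HS as [_ [_ [_ H]]]; intro Hx; apply H, Hx. Qed.

Lemma semicopula_1x x : in01 x -> S 1 x = x.
Proof. destruct HS as [_ [_ [_ H]]]; intro Hx; apply H, Hx. Qed.

Lemma semicopula_x0 x : in01 x -> S x 0 = 0.
Proof.
  intro Hx. apply Rle_antisym; [| apply semicopula_in01; auto].
  rewrite <- (semicopula_1x 0) at 2; auto. apply semicopula_mono_l; auto. apply Hx.
Qed.

Lemma semicopula_0x x : in01 x -> S 0 x = 0.
Proof.
  intro Hx. apply Rle_antisym; [| apply semicopula_in01; auto].
  rewrite <- (semicopula_x1 0) at 2; auto. apply semicopula_mono_r; auto. apply Hx.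
Qed.

Lemma semicopula_nondecreasing a : in01 a -> nondecreasing01 (S a).
Proof. intros Ha x y Hx Hy. now apply semicopula_mono_r. Qed.

Section Integral.
Context {X : Type} (mu : (X -> Prop) -> R) (h : X -> R).
Hypothesis mu_h_in01 : forall t, in01 (mu (fun x => t <= h x)).

Definition sugeno_values : R -> Prop :=
  fun y => exists t, in01 t /\ y = S t (mu (fun x => t <= h x)).

Lemma sugeno_is_lub : is_lub sugeno_values (sugeno S mu h).
Proof.
  apply (Rsup_is_lub _ 1).
  - exists (S 0 (mu (fun x => 0 <= h x))). exists 0. auto.
  - intros y [t [Ht ->]]. apply semicopula_in01; auto.
Qed.

Lemma sugeno_ge t : in01 t -> S t (mu (fun x => t <= h x)) <= sugeno S mu h.
Proof. intro Ht. apply sugeno_is_lub. exists t. auto. Qed.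

Lemma sugeno_le c :
  (forall t, in01 t -> S t (mu (fun x => t <= h x)) <= c) -> sugeno S mu h <= c.
Proof. intro Hc. apply sugeno_is_lub. intros y [t [Ht ->]]. auto. Qed.

Lemma sugeno_in01 : in01 (sugeno S mu h).
Proof.
  split.
  - rewrite <- (semicopula_0x (mu (fun x => 0 <= h x))); auto. apply sugeno_ge; auto.
  - apply sugeno_le. intros t Ht. apply semicopula_in01; auto.
Qed.

End Integral.

Lemma sugeno_two_point (x y : R) (h : bool -> R) :
  in01 x -> in01 y -> h true = x -> h false = 0 -> sugeno S (mu_two_point y) h = S x y.
Proof.
  intros Hx Hy Htrue Hfalse.
  assert (Hmu : forall t, in01 (mu_two_point y (fun b => t <= h b)))
    by (intro; now apply mu_two_point_in01).
  apply Rle_antisym.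
  - apply sugeno_le; [exact Hmu |]. intros t Ht. unfold mu_two_point.
    rewrite Htrue, Hfalse. destruct_ifs.
    + replace t with 0 by (destruct Ht; lra).
      rewrite semicopula_0x; auto. apply semicopula_in01; auto.
    + now apply semicopula_mono_l.
    + rewrite semicopula_x0; auto. apply semicopula_in01; auto.
  - destruct (Req_dec x 0) as [-> | Hx0].
    + rewrite semicopula_0x; auto. apply sugeno_in01, Hmu.
    + apply Rle_trans with (S x (mu_two_point y (fun b => x <= h b))); [| now apply sugeno_ge].
      unfold mu_two_point. rewrite Htrue, Hfalse.
      destruct_ifs; try lra; destruct Hx; exfalso; lra.
Qed.

Section CountableCapacities.
Context {T : Type} (h : T -> R).
Hypotheses (T_inhabited : inhabited T) (h_in01 : forall n, in01 (h n)).

Lemma sugeno_mu_forall_le n : sugeno S mu_forall h <= h n.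
Proof.
  apply sugeno_le; [intro; apply mu_forall_in01 |]. intros t Ht. unfold mu_forall.
  destruct_ifs.
  - rewrite semicopula_x1; auto.
  - rewrite semicopula_x0; auto. apply h_in01.
Qed.

Lemma sugeno_mu_forall_ge c : (forall n, c <= h n) -> c <= sugeno S mu_forall h.
Proof.
  intro Hc. destruct T_inhabited as [n0].
  assert (Hmu : forall t, in01 (mu_forall (fun n => t <= h n))) by (intro; apply mu_forall_in01).
  destruct (Rle_dec c 0).
  - apply Rle_trans with 0; [lra | apply (sugeno_in01 _ _ Hmu)].
  - assert (Hc01 : in01 c) by (split; [lra | apply Rle_trans with (h n0); [apply Hc | apply h_in01]]).
    apply Rle_trans with (S c (mu_forall (fun n => c <= h n))); [| now apply sugeno_ge].
    unfold mu_forall. destruct_ifs; [rewrite semicopula_x1; auto; lra | exfalso; auto].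
Qed.

Lemma sugeno_mu_exists_ge n : h n <= sugeno S mu_exists h.
Proof.
  apply Rle_trans with (S (h n) (mu_exists (fun m => h n <= h m)));
    [| apply sugeno_ge; [intro; apply mu_exists_in01 | apply h_in01]].
  unfold mu_exists. destruct_ifs.
  - rewrite semicopula_x1; [lra | apply h_in01].
  - exfalso. eauto using Rle_refl.
Qed.

Lemma sugeno_mu_exists_le c : (forall n, h n <= c) -> sugeno S mu_exists h <= c.
Proof.
  intro Hc. destruct T_inhabited as [n0].
  apply sugeno_le; [intro; apply mu_exists_in01 |]. intros t Ht. unfold mu_exists.
  destruct (excluded_middle_informative _) as [[n Hn] | _].
  - rewrite semicopula_x1; auto. apply Rle_trans with (h n); auto.
  - rewrite semicopula_x0; auto. apply Rle_trans with (h n0); [apply h_in01 | apply Hc].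
Qed.

End CountableCapacities.

Section Homogeneous.
Hypothesis S_homogeneous : sugeno_homogeneous S.

Lemma homogeneous_full_capacity {T : Type} (mu : (T -> Prop) -> R) (h : T -> R) (a : R) :
  inhabited T -> capacity (fun _ => True) mu -> (forall x, in01 (h x)) -> in01 a ->
  sugeno S mu (fun x => S a (h x)) = S a (sugeno S mu h).
Proof.
  intros HT Hmu Hh Ha.
  exact (S_homogeneous T _ mu h a HT (sigma_algebra_full T) Hmu Hh (fun _ _ => I) Ha).
Qed.

Lemma homogeneous_assoc x y z :
  in01 x -> in01 y -> in01 z -> S (S x y) z = S x (S y z).
Proof.
  intros Hx Hy Hz.
  set (f := fun b : bool => if b then y else 0).
  assert (Hf : forall b, in01 (f b)) by (intros []; simpl; auto).
  rewrite <- (sugeno_two_point (S x y) z (fun b => S x (f b)));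
    [| apply semicopula_in01 | | reflexivity | apply semicopula_x0]; auto.
  rewrite <- (sugeno_two_point y z f); auto.
  apply homogeneous_full_capacity; auto using mu_two_point_capacity.
  exact (inhabits true).
Qed.

Lemma homogeneous_right_continuous a x e : in01 a -> in01 x -> 0 < e ->
  exists d, 0 < d /\ S a (Rmin 1 (x + d)) < S a x + e.
Proof.
  intros Ha Hx He. pose proof (inhabits 0%nat) as Hnat.
  set (h := fun n : nat => Rmin 1 (x + / (INR n + 1))).
  assert (Hxh : forall n, x <= h n)
    by (intro n; pose proof (RinvN_pos n); apply Rmin_glb; destruct Hx; lra).
  assert (Hh : forall n, in01 (h n)) by (intro n; split; [destruct Hx; specialize (Hxh n); lra | apply Rmin_l]).
  assert (Hinf : sugeno S mu_forall h = x).
  { apply Rle_antisym.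
    - apply le_of_le_add_inv_succ. intro n.
      apply Rle_trans with (h n); [now apply sugeno_mu_forall_le | apply Rmin_r].
    - now apply sugeno_mu_forall_ge. }
  assert (HSinf : sugeno S mu_forall (fun n => S a (h n)) = S a x).
  { rewrite homogeneous_full_capacity, Hinf; auto using mu_forall_capacity. }
  apply NNPP; intro Hno.
  assert (S a x + e <= sugeno S mu_forall (fun n => S a (h n))); [| lra].
  apply sugeno_mu_forall_ge; auto using semicopula_in01.
  intro n. apply Rnot_lt_le; intro. apply Hno. exists (/ (INR n + 1)).
  split; [apply RinvN_pos | assumption].
Qed.

Lemma homogeneous_left_continuous a x e : in01 a -> in01 x -> 0 < e ->
  exists d, 0 < d /\ S a x - e < S a (Rmax 0 (x - d)).
Proof.
  intros Ha Hx He. pose proof (inhabits 0%nat) as Hnat.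
  set (h := fun n : nat => Rmax 0 (x - / (INR n + 1))).
  assert (Hhx : forall n, h n <= x)
    by (intro n; pose proof (RinvN_pos n); apply Rmax_lub; destruct Hx; lra).
  assert (Hh : forall n, in01 (h n)) by (intro n; split; [apply Rmax_l | destruct Hx; specialize (Hhx n); lra]).
  assert (Hsup : sugeno S mu_exists h = x).
  { apply Rle_antisym; [now apply sugeno_mu_exists_le |].
    apply le_of_le_add_inv_succ. intro n.
    assert (x - / (INR n + 1) <= h n) by apply Rmax_r.
    assert (h n <= sugeno S mu_exists h) by (apply sugeno_mu_exists_ge; auto). lra. }
  assert (HSsup : sugeno S mu_exists (fun n => S a (h n)) = S a x).
  { rewrite homogeneous_full_capacity, Hsup; auto using mu_exists_capacity. }
  apply NNPP; intro Hno.
  assert (sugeno S mu_exists (fun n => S a (h n)) <= S a x - e); [| lra].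
  apply sugeno_mu_exists_le; auto using semicopula_in01.
  intro n. apply Rnot_lt_le; intro. apply Hno. exists (/ (INR n + 1)).
  split; [apply RinvN_pos | assumption].
Qed.

Lemma homogeneous_continuous a : in01 a -> continuous01 (S a).
Proof.
  intro Ha. apply continuous01_of_one_sided.
  - now apply semicopula_nondecreasing.
  - intros x e Hx He. now apply homogeneous_right_continuous.
  - intros x e Hx He. now apply homogeneous_left_continuous.
Qed.

End Homogeneous.

Section AssociativeContinuous.
Hypothesis S_assoc : forall x y z, in01 x -> in01 y -> in01 z -> S (S x y) z = S x (S y z).
Hypothesis S_continuous : forall a, 0 < a < 1 -> continuous01 (S a).

Lemma semicopula_continuous a : in01 a -> continuous01 (S a).
Proof.
  intro Ha. destruct (Req_dec a 0) as [-> | Ha0]; [| destruct (Req_dec a 1) as [-> | Ha1]].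
  - intros x Hx e He. exists 1. split; [lra |]. intros y Hy _.
    rewrite (semicopula_0x x), (semicopula_0x y), Rminus_diag, Rabs_R0; auto.
  - intros x Hx e He. exists e. split; [exact He |]. intros y Hy Hyx.
    rewrite !semicopula_1x; auto.
  - apply S_continuous. destruct Ha; lra.
Qed.

Lemma semicopula_upper_level_set {X : Type} (f : X -> R) (a s : R) :
  (forall x, in01 (f x)) -> in01 a -> in01 s ->
  (fun x => s <= S a (f x)) = (fun _ => False) \/
  exists t, in01 t /\ S a t = s /\ (fun x => s <= S a (f x)) = (fun x => t <= f x).
Proof.
  intros Hf Ha Hs.
  destruct (Rle_dec s a) as [Hsa | Has].
  - right.
    destruct (continuous_nondecreasing_level (S a) (semicopula_nondecreasing a Ha) s)
      as [t [Ht [Hts Hlevel]]];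
      [now apply semicopula_continuous | rewrite semicopula_x0, semicopula_x1; auto; split; [apply Hs | exact Hsa] |].
    exists t. split; [exact Ht | split; [exact Hts |]].
    apply functional_extensionality; intro x. apply propositional_extensionality, Hlevel, Hf.
  - left. apply functional_extensionality; intro x. apply propositional_extensionality.
    split; [| intros []]. intro Hsx.
    assert (S a (f x) <= S a 1) by (apply semicopula_mono_r; auto; apply Hf).
    rewrite semicopula_x1 in *; auto. lra.
Qed.

Lemma assoc_continuous_homogeneous : sugeno_homogeneous S.
Proof.
  intros X A mu f a _ [HA0 _] [Hmu01 [Hmu_mono [Hmu0 _]]] Hf Hmeas Ha.
  assert (HAf : forall t, A (fun x => t <= f x)) by (intro t; exact (Hmeas _ (borel_ge t))).
  assert (Hmuf : forall t, in01 (mu (fun x => t <= f x))) by auto.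
  assert (HAaf : forall s, in01 s -> A (fun x => s <= S a (f x))).
  { intros s Hs. destruct (semicopula_upper_level_set f a s Hf Ha Hs) as [-> | [t [_ [_ ->]]]]; auto. }
  pose proof (sugeno_in01 mu f Hmuf) as HM.
  apply Rsup_eq. split.
  - intros v [s [Hs ->]].
    destruct (semicopula_upper_level_set f a s Hf Ha Hs) as [-> | [t [Ht [<- ->]]]].
    + rewrite Hmu0, semicopula_x0; auto. apply semicopula_in01; auto.
    + rewrite S_assoc; auto. apply semicopula_mono_r; auto using semicopula_in01.
      now apply sugeno_ge.
  - intros b Hb.
    apply (continuous_nondecreasing_lub (S a) (semicopula_nondecreasing a Ha)
             (sugeno_values mu f)); auto using semicopula_continuous, sugeno_is_lub.
    + intros y [t [Ht ->]]. auto using semicopula_in01.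
    + intros v [w [[t [Ht ->]] ->]].
      assert (Hat : in01 (S a t)) by auto using semicopula_in01.
      rewrite <- S_assoc; auto.
      apply Rle_trans with (S (S a t) (mu (fun x => S a t <= S a (f x)))).
      * apply semicopula_mono_r; auto.
        apply Hmu_mono; auto. intros x Hx. apply semicopula_mono_r; auto.
      * apply Hb. exists (S a t). auto.
Qed.

End AssociativeContinuous.
End Semicopula.

Theorem theorem2 (S : R -> R -> R) (HS : semicopula S)
  (Hpw : forall a, 0 < a < 1 -> piecewise_cst_or_strict (fun x => S a x)) :
  (forall (X : Type) (A : (X -> Prop) -> Prop) (mu : (X -> Prop) -> R) (f : X -> R) (a : R),
      inhabited X -> sigma_algebra A -> capacity A mu ->
      (forall x, in01 (f x)) -> measurable A f -> in01 a ->
      sugeno S mu (fun x => S a (f x)) = S a (sugeno S mu f))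
  <->
  ((forall x y z, in01 x -> in01 y -> in01 z -> S (S x y) z = S x (S y z)) /\
   (forall a, 0 < a < 1 -> continuous01 (fun x => S a x))).
Proof.
  split.
  - intro Hhom. split.
    + exact (homogeneous_assoc S HS Hhom).
    + intros a Ha. apply (homogeneous_continuous S HS Hhom). unfold in01; lra.
  - intros [Hassoc Hcont]. exact (assoc_continuous_homogeneous S HS Hassoc Hcont).
Qed.
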